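(* Let $a,d\in\mathbb N$ and let $\chi\in M(d)_\mathbb{R}$ be strictly dominant with $\chi\in\mathbf{V}^a(1,d)$. Then there exist real numbers $c_{ij}$ ($1\le j<i\le d$) and $c_i$ ($1\le i\le d$) with \[ \chi=\sum_{1\le j<i\le d}c_{ij}(\beta_i-\beta_j)+\sum_{i=1}^dc_i\beta_i,\qquad 0\le c_{ij}\le\tfrac32,\quad -\tfrac{a+2}{2}\le c_i\le\tfrac a2. \]
   Context: $T(d)\subset GL(d)$ diagonal torus with character lattice $M(d)$ having coordinate characters $\beta_1,\dots,\beta_d$; $M(d)_\mathbb R=M(d)\otimes\mathbb R$. $\chi=\sum b_i\beta_i$ is strictly dominant if $b_1<\cdots<b_d$. $\mathbf{V}^a(1,d):=\frac32\,\mathrm{sum}[0,\beta_i-\beta_j]+\frac a2\,\mathrm{sum}[-\beta_k,\beta_k]+\mathrm{sum}[-\beta_k,0]$, Minkowski sums of segments over all $1\le i,j\le d$ and all $1\le k\le d$. *)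

From HB Require Import structures.
From mathcomp Require Import all_boot all_order all_algebra.
From mathcomp Require Import reals.
Unset Printing Implicit Defensive.
Import Order.TTheory GRing.Theory Num.Theory.
Local Open Scope ring_scope.

(* M(d)_R is modelled as row vectors 'rV[R]_d; beta i is the i-th coordinate
   character (standard basis vector), indices 0..d-1 instead of 1..d. *)
Definition beta (R : realType) {d : nat} (i : 'I_d) : 'rV[R]_d := delta_mx 0 i.

Definition vset (R : realType) (d : nat) := 'rV[R]_d -> Prop.

Definition segment {R : realType} {d : nat} (u v : 'rV[R]_d) : vset R d :=
  fun x => exists t : R, 0 <= t <= 1 /\ x = (1 - t) *: u + t *: v.

Definition msum {R : realType} {d : nat} {I : finType} (S : I -> vset R d) : vset R d :=
  fun x => exists f : I -> 'rV[R]_d, (forall i, S i (f i)) /\ x = \sum_(i : I) f i.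

Definition mplus {R : realType} {d : nat} (A B : vset R d) : vset R d :=
  fun x => exists y z, A y /\ B z /\ x = y + z.

Definition mscale {R : realType} {d : nat} (c : R) (A : vset R d) : vset R d :=
  fun x => exists y, A y /\ x = c *: y.

Definition Va1 (R : realType) (a d : nat) : vset R d :=
  mplus (mplus
    (mscale (3 / 2) (msum (fun ij : 'I_d * 'I_d => segment 0 (beta R ij.1 - beta R ij.2))))
    (mscale (a%:R / 2) (msum (fun k : 'I_d => segment (- beta R k) (beta R k)))))
    (msum (fun k : 'I_d => segment (- beta R k) 0)).

Definition strictly_dominant {R : realType} {d : nat} (chi : 'rV[R]_d) : Prop :=
  forall i j : 'I_d, (i < j)%N -> chi 0 i < chi 0 j.

From mathcomp Require Import all_boot all_order all_algebra.
From mathcomp Require Import reals boolp topology normedtype.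
From mathcomp Require Import ring lra zify.
Import Order.TTheory GRing.Theory Num.Theory.
Import numFieldNormedType.Exports.
Local Open Scope ring_scope.

(* Write chi = sum_k x_k beta_k with x increasing.  Evaluating the coordinate
   sum over an index set P on the zonotope V^a(1,d) bounds the sums of x over
   initial and final segments of indices.  These bounds allow a splitting
   x = c + q in which c_k = clamp (th + x_k) into [-(a+2)/2, a/2] (th chosen by
   the intermediate value theorem so that q sums to 0), q is nondecreasing, and
   the sum of the m largest entries of q is at most 3/2 m (d - m).  Such a q is
   a combination of the roots beta_i - beta_j (j < i) with coefficients in
   [0, 3/2]: by induction on d, the largest entry is fed by flows from all
   smaller indices, themselves found by a clamp splitting into [-3/2, 0]. *)

Section Clamp.
Context {R : realType}.
Implicit Types lo hi u v th : R.

Definition clamp lo hi v := Num.max lo (Num.min hi v).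

Lemma clamp_cases lo hi v : lo <= hi ->
  [\/ v <= lo /\ clamp lo hi v = lo, lo <= v <= hi /\ clamp lo hi v = v
    | hi <= v /\ clamp lo hi v = hi].
Proof.
move=> lohi; rewrite /clamp; have [vhi|hiv] := leP v hi.
  by have [vlo|lov] := leP v lo; [constructor 1 | constructor 2; rewrite ltW].
by constructor 3; split; [exact: ltW | exact: max_r].
Qed.
Arguments clamp_cases {lo hi} v.

Lemma clamp_in lo hi v : lo <= hi -> lo <= clamp lo hi v <= hi.
Proof. by move=> lohi; case: (clamp_cases v lohi) => -[? ->]; lra. Qed.

Lemma clamp_eq_lo lo hi v : lo <= hi -> v <= lo -> clamp lo hi v = lo.
Proof. by move=> lohi vlo; case: (clamp_cases v lohi) => -[? ->]; lra. Qed.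

Lemma clamp_eq_hi lo hi v : lo <= hi -> hi <= v -> clamp lo hi v = hi.
Proof. by move=> lohi hiv; case: (clamp_cases v lohi) => -[? ->]; lra. Qed.

Lemma clamp_id lo hi v : lo <= v <= hi -> clamp lo hi v = v.
Proof. by move=> /andP[lov vhi]; rewrite /clamp (min_r vhi) (max_r lov). Qed.

Lemma sub_clamp_mono lo hi th u v : lo <= hi -> u <= v ->
  u - clamp lo hi (th + u) <= v - clamp lo hi (th + v).
Proof.
move=> lohi uv.
by case: (clamp_cases (th + u) lohi) => -[? ->];
   case: (clamp_cases (th + v) lohi) => -[? ->]; lra.
Qed.

Lemma clamp_continuous lo hi u : continuous (fun th => clamp lo hi (th + u)).
Proof.
move=> th; apply: (@continuous_max _ _ (fun=> lo) (fun th => Num.min hi (th + u))).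
  exact: cst_continuous.
apply: (@continuous_min _ _ (fun=> hi) (fun th => th + u)); first exact: cst_continuous.
by apply: (@continuousD _ _ _ id (fun=> u)); [exact: cvg_id | exact: cst_continuous].
Qed.

Lemma sum_clamp_continuous lo hi (g : nat -> R) N :
  continuous (fun th => \sum_(0 <= k < N) clamp lo hi (th + g k)).
Proof.
elim: N => [|N IH] th.
  by under eq_fun do rewrite big_geq //; exact: cst_continuous.
under eq_fun do rewrite big_nat_recr //=.
by apply: (@continuousD _ _ _ (fun th => \sum_(0 <= k < N) clamp lo hi (th + g k))
  (fun th => clamp lo hi (th + g N))); [exact: IH | exact: clamp_continuous].
Qed.

Lemma sum_clamp_level lo hi (g : nat -> R) N s : lo <= hi ->
  N%:R * lo <= s <= N%:R * hi ->
  exists th, \sum_(0 <= k < N) clamp lo hi (th + g k) = s.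
Proof.
move=> lohi /andP[los shi].
pose M := \sum_(0 <= k < N) `|g k|.
have gM k : (k < N)%N -> `|g k| <= M.
  by move=> kN; rewrite /M big_mkord (bigD1 (Ordinal kN)) //= lerDl sumr_ge0.
pose F th := \sum_(0 <= k < N) clamp lo hi (th + g k).
have F_const th c : (forall k, (0 <= k < N)%N -> clamp lo hi (th + g k) = c) ->
    F th = N%:R * c.
  by move=> Fc; rewrite /F (eq_big_nat _ _ Fc) sumr_const_nat subn0 mulr_natl.
have Flo : F (lo - M) = N%:R * lo.
  apply: F_const => k /andP[_ /gM]; have := ler_norm (g k).
  by move=> *; apply: clamp_eq_lo => //; lra.
have Fhi : F (hi + M) = N%:R * hi.
  apply: F_const => k /andP[_ /gM]; have := ler_norm (- g k); rewrite normrN.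
  by move=> *; apply: clamp_eq_hi => //; lra.
have M0 : 0 <= M by rewrite sumr_ge0.
have [|||th _ <-] := @IVT R F (lo - M) (hi + M) s; first lra.
- exact/continuous_subspaceT/sum_clamp_continuous.
- have Nlohi : N%:R * lo <= N%:R * hi by rewrite ler_wpM2l.
  by rewrite Flo Fhi (min_l Nlohi) (max_r Nlohi) los shi.
by exists th.
Qed.

End Clamp.

Lemma concave_or_nonneg_ge0 (R : realType) (D : nat -> R) (N : nat) :
  0 <= D 0%N -> 0 <= D N ->
  (forall m, (0 < m < N)%N -> 0 <= D m \/ D m.-1 + D m.+1 < 2 * D m) ->
  forall m, (m <= N)%N -> 0 <= D m.
Proof.
move=> D0 DN Dmid.
have [m0 _ m0_min] := @arg_minP _ _ _ ord0 predT (fun i : 'I_N.+1 => D i) isT.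
have Dmin m : (m <= N)%N -> D m0 <= D m.
  by move=> mN; have := m0_min (Ordinal (mN : (m < N.+1)%N)) isT.
suff : 0 <= D m0 by move=> ? m /Dmin; apply: le_trans.
have [->|m0_gt0] := posnP m0; first exact: D0.
have [->|m0_neq] := eqVneq (m0 : nat) N; first exact: DN.
have m0_lt : (m0 < N)%N by have := ltn_ord m0; lia.
have [//|] := Dmid m0 (ltac:(lia)).
by have := Dmin m0.-1 (ltac:(lia)); have := Dmin m0.+1 m0_lt; lra.
Qed.

Definition top_sum {V : nmodType} (y : nat -> V) (N m : nat) : V :=
  \sum_(N - m <= k < N) y k.

Lemma top_sumS {V : nmodType} (y : nat -> V) (N m : nat) : (m < N)%N ->
  top_sum y N m.+1 = y (N - m.+1)%N + top_sum y N m.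
Proof. by move=> mN; rewrite /top_sum big_ltn ?subnSK //; lia. Qed.

Lemma sum_bot_top {V : nmodType} (y : nat -> V) (N m : nat) : (m <= N)%N ->
  \sum_(0 <= k < N) y k = \sum_(0 <= k < N - m) y k + top_sum y N m.
Proof. by move=> mN; rewrite /top_sum -big_cat_nat ?leq_subr. Qed.

Section ClampDecomposition.
Variables (R : realType) (t lo hi th : R) (N : nat) (x : nat -> R).
Hypotheses (t_gt0 : 0 < t) (lohi : lo <= hi)
  (x_mono : forall i j, (i <= j < N)%N -> x i <= x j)
  (x_top : forall m, (m <= N)%N ->
     top_sum x N m <= m%:R * hi + t * (m * (N - m))%:R)
  (x_bot : forall m, (m <= N)%N ->
     m%:R * lo - t * (m * (N - m))%:R <= \sum_(0 <= k < m) x k)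
  (th_level : \sum_(0 <= k < N) clamp lo hi (th + x k) = \sum_(0 <= k < N) x k).

Local Notation y := (fun k => x k - clamp lo hi (th + x k)).

Lemma sum_sub_clamp_eq0 : \sum_(0 <= k < N) y k = 0.
Proof. by rewrite sumrB th_level subrr. Qed.

Lemma top_sum_sub_clamp_hi m : (m <= N)%N -> hi <= th + x (N - m)%N ->
  top_sum y N m <= t * (m * (N - m))%:R.
Proof.
move=> mN hi_le.
have c_hi k : (N - m <= k < N)%N -> clamp lo hi (th + x k) = hi.
  move=> mkN; apply: clamp_eq_hi => //.
  by have := x_mono _ _ (mkN : (N - m <= k < N)%N); lra.
have := x_top m mN; rewrite /top_sum sumrB (eq_big_nat _ _ c_hi) sumr_const_nat.
by rewrite subKn // -mulr_natl; lra.
Qed.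

Lemma top_sum_sub_clamp_lo m : (m < N)%N -> th + x (N - m.+1)%N <= lo ->
  top_sum y N m <= t * (m * (N - m))%:R.
Proof.
move=> mN le_lo.
have c_lo k : (0 <= k < N - m)%N -> clamp lo hi (th + x k) = lo.
  move=> /andP[_ km]; apply: clamp_eq_lo => //.
  by have := x_mono _ _ (ltac:(lia) : (k <= N - m.+1 < N)%N); lra.
have := sum_sub_clamp_eq0; rewrite (sum_bot_top _ _ _ (ltnW mN)) sumrB.
rewrite (eq_big_nat _ _ c_lo) sumr_const_nat subn0 -mulr_natl.
have := x_bot _ (leq_subr m N); rewrite subKn 1?mulnC; [lra | exact: ltnW].
Qed.

(* The slack D m of the m-th top sum is nonnegative at both ends.  Where the
   clamp is active on the top m or on the bottom N - m entries, D m >= 0 follows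
   from x_top or x_bot; otherwise y equals -th on the two entries around the
   cut, so D has second difference -2t there. *)
Lemma top_sum_sub_clamp_le m : (m <= N)%N -> top_sum y N m <= t * (m * (N - m))%:R.
Proof.
move: m; pose D m := t * (m * (N - m))%:R - top_sum y N m.
suff D_ge0 : forall m, (m <= N)%N -> 0 <= D m by move=> m /D_ge0; rewrite /D; lra.
apply: concave_or_nonneg_ge0.
- by rewrite /D /top_sum subn0 big_geq // mul0n mulr0 subrr.
- by rewrite /D /top_sum subnn muln0 mulr0 sum_sub_clamp_eq0 subrr.
move=> m /andP[m_gt0 mN].
have [hi_le|lt_hi] := leP hi (th + x (N - m)%N).
  by left; rewrite /D subr_ge0; exact: top_sum_sub_clamp_hi (ltnW mN) hi_le.
have [le_lo|lo_lt] := leP (th + x (N - m.+1)%N) lo.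
  by left; rewrite /D subr_ge0; exact: top_sum_sub_clamp_lo.
right.
have x_le : x (N - m.+1)%N <= x (N - m)%N by apply: x_mono; lia.
have y_mid k : lo <= th + x k <= hi -> y k = - th.
  by move=> /clamp_id ->; ring.
have Tm1 : top_sum y N m.+1 = - th + top_sum y N m.
  by rewrite top_sumS // y_mid //; lra.
have Tm : top_sum y N m = - th + top_sum y N m.-1.
  rewrite -{1}(prednK m_gt0) top_sumS ?prednK ?y_mid //; [lra | lia].
have cast_eq : (m.-1 * (N - m.-1))%:R + (m.+1 * (N - m.+1))%:R + 2
    = 2 * (m * (N - m))%:R :> R.
  by rewrite -!natrD -natrM; congr (_%:R); nia.
by rewrite /D Tm1 Tm; have := t_gt0; nra.
Qed.

End ClampDecomposition.

Lemma clamp_decomposition {R : realType} {t lo hi : R} {N : nat} {x : nat -> R} :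
  0 < t -> lo <= hi ->
  (forall i j, (i <= j < N)%N -> x i <= x j) ->
  (forall m, (m <= N)%N -> top_sum x N m <= m%:R * hi + t * (m * (N - m))%:R) ->
  (forall m, (m <= N)%N -> m%:R * lo - t * (m * (N - m))%:R <= \sum_(0 <= k < m) x k) ->
  exists c : nat -> R, [/\ forall k, lo <= c k <= hi,
    forall i j, (i <= j < N)%N -> x i - c i <= x j - c j,
    \sum_(0 <= k < N) (x k - c k) = 0 &
    forall m, (m <= N)%N -> top_sum (fun k => x k - c k) N m <= t * (m * (N - m))%:R].
Proof.
move=> t_gt0 lohi x_mono x_top x_bot.
have [th th_level] : exists th,
    \sum_(0 <= k < N) clamp lo hi (th + x k) = \sum_(0 <= k < N) x k.
  apply: sum_clamp_level => //; have := x_top N (leqnn N); have := x_bot N (leqnn N).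
  by rewrite /top_sum subnn muln0 mulr0 subr0 addr0 => -> ->.
exists (fun k => clamp lo hi (th + x k)); split.
- by move=> k; exact: clamp_in.
- by move=> i j ijN; apply: sub_clamp_mono => //; exact: x_mono.
- exact: sum_sub_clamp_eq0.
- by move=> m; exact: top_sum_sub_clamp_le.
Qed.

Lemma top_sum_drop_last {R : realType} {t : R} {n m : nat} {q : nat -> R} :
  (forall i j, (i <= j < n.+1)%N -> q i <= q j) ->
  (forall l, (l <= n.+1)%N -> top_sum q n.+1 l <= t * (l * (n.+1 - l))%:R) ->
  (m <= n)%N -> top_sum q n m <= t * (m * (n - m))%:R.
Proof.
move=> q_mono q_top mn.
have top_le : top_sum q n m <= m%:R * q n.
  rewrite -[m in m%:R](subKn mn) mulr_natl -sumr_const_nat.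
  by apply: ler_sum_nat => k /andP[_ kn]; apply: q_mono; lia.
have top_sum_last : top_sum q n.+1 m.+1 = q n + top_sum q n m.
  by rewrite /top_sum subSS big_nat_recr ?leq_subr //= addrC.
have := ler_wpM2l (ler0n R m) (q_top m.+1 mn).
rewrite top_sum_last subSS !natrM -!natr1 => h.
rewrite -(ler_pM2l (ltr0Sn R m)) -natr1.
have : (m%:R + 1) * top_sum q n m <= m%:R * (q n + top_sum q n m) by lra.
lra.
Qed.

Lemma bot_sum_ge {R : realType} {t : R} {n m : nat} {q : nat -> R} :
  \sum_(0 <= k < n) q k = 0 ->
  (forall l, (l <= n)%N -> top_sum q n l <= t * (l * (n - l))%:R) ->
  (m <= n)%N -> - (t * (m * (n - m))%:R) <= \sum_(0 <= k < m) q k.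
Proof.
move=> q_sum q_top mn.
have := q_top _ (leq_subr m n); have := sum_bot_top q _ _ (leq_subr m n).
by rewrite q_sum subKn // mulnC; lra.
Qed.

(* In the inductive step the last entry receives the flows - c_j from every
   smaller index j, where c clamps the remaining entries into [-t, 0]; then
   q - c satisfies the same hypotheses with one entry fewer. *)
Lemma flow_decomposition {R : realType} {t : R} {N : nat} {q : nat -> R} : 0 < t ->
  (forall i j, (i <= j < N.+1)%N -> q i <= q j) ->
  \sum_(0 <= k < N.+1) q k = 0 ->
  (forall m, (m <= N.+1)%N -> top_sum q N.+1 m <= t * (m * (N.+1 - m))%:R) ->
  exists e : nat -> nat -> R, (forall i j, 0 <= e i j <= t) /\
    forall k, (k <= N)%N ->
      q k = \sum_(0 <= j < k) e k j - \sum_(k.+1 <= i < N.+1) e i k.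
Proof.
move=> t_gt0; elim: N q => [|N IH] q q_mono q_sum q_top.
  exists (fun _ _ => 0); split=> [i j|k]; first by rewrite lexx ltW.
  by rewrite leqn0 => /eqP ->; rewrite !big_geq // subrr; rewrite big_nat1 in q_sum.
have q_mono' i j : (i <= j < N.+1)%N -> q i <= q j.
  by move=> ijN; apply: q_mono; lia.
have q_top' m : (m <= N.+1)%N ->
    top_sum q N.+1 m <= m%:R * 0 + t * (m * (N.+1 - m))%:R.
  by move=> mN; rewrite mulr0 add0r; exact: top_sum_drop_last q_mono q_top mN.
have q_bot' m : (m <= N.+1)%N ->
    m%:R * - t - t * (m * (N.+1 - m))%:R <= \sum_(0 <= k < m) q k.
  move=> mN; have := bot_sum_ge q_sum q_top (leqW mN).
  by rewrite (_ : m * (N.+2 - m) = m + m * (N.+1 - m))%N ?natrD; [lra | nia].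
have [c [c_in qc_mono qc_sum qc_top]] :=
  clamp_decomposition t_gt0 (ltac:(lra) : - t <= 0) q_mono' q_top' q_bot'.
have [e [e_in e_eq]] := IH _ qc_mono qc_sum qc_top.
exists (fun i j => if i == N.+1 then - c j else e i j); split.
  by move=> i j; case: eqP => _; [have := c_in j; lra | exact: e_in].
move=> k; rewrite leq_eqVlt => /orP[/eqP ->|kN].
  rewrite [X in _ - X]big_geq // subr0 (eq_big_nat _ _ (F2 := fun j => - c j)).
    by move: q_sum qc_sum; rewrite big_nat_recr //= sumrB sumrN; lra.
  by move=> j _; rewrite eqxx.
rewrite big_nat_recr //= eqxx (eq_big_nat _ _ (F2 := e k)); last first.
  by move=> j /andP[_ jk]; rewrite ifN //; lia.
rewrite (eq_big_nat _ _ (F1 := fun i => if i == N.+1 then _ else _) (F2 := e^~ k));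
  last by move=> i /andP[_ iN]; rewrite ifN //; lia.
by have := e_eq k kN; lra.
Qed.

Section FunctionalBounds.
Context {R : realType} {d : nat} (phi : 'rV[R]_d -> R).

Definition within_bounds (A : vset R d) (lb ub : R) :=
  forall x, A x -> lb <= phi x <= ub.

Hypotheses (phi0 : phi 0 = 0) (phiD : {morph phi : u v / u + v})
  (phiZ : forall c v, phi (c *: v) = c * phi v).

Lemma segment_within_bounds {u v : 'rV[R]_d} {lb ub : R} :
  lb <= phi u <= ub -> lb <= phi v <= ub -> within_bounds (segment u v) lb ub.
Proof.
move=> /andP[lbu uub] /andP[lbv vub] _ [s [/andP[s0 s1] ->]].
rewrite phiD !phiZ; apply/andP; split; nra.
Qed.

Lemma msum_within_bounds {I : finType} {S : I -> vset R d} {lb ub : I -> R} :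
  (forall i, within_bounds (S i) (lb i) (ub i)) ->
  within_bounds (msum S) (\sum_i lb i) (\sum_i ub i).
Proof.
move=> S_bd _ [f [Sf ->]]; rewrite (big_morph phi phiD phi0).
by apply/andP; split; apply: ler_sum => i _; case/andP: (S_bd _ _ (Sf i)).
Qed.

Lemma mscale_within_bounds {c lb ub : R} {A : vset R d} : 0 <= c ->
  within_bounds A lb ub -> within_bounds (mscale c A) (c * lb) (c * ub).
Proof.
move=> c0 A_bd _ [y [/A_bd/andP[lby yub] ->]].
by rewrite phiZ !ler_wpM2l.
Qed.

Lemma mplus_within_bounds {A B : vset R d} {lbA ubA lbB ubB : R} :
  within_bounds A lbA ubA -> within_bounds B lbB ubB ->
  within_bounds (mplus A B) (lbA + lbB) (ubA + ubB).
Proof.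
move=> A_bd B_bd _ [y [z [/A_bd/andP[? ?] [/B_bd/andP[? ?] ->]]]].
by rewrite phiD; apply/andP; split; apply: lerD.
Qed.

End FunctionalBounds.

Lemma sum_indicator (R : realType) (I : finType) (A : pred I) :
  \sum_i ((A i)%:R : R) = #|A|%:R.
Proof.
rewrite (eq_bigr (fun i => if A i then 1 else 0)); last by move=> i _; case: (A i).
by rewrite -big_mkcond sumr_const.
Qed.

Lemma sum_pair_indicator (R : realType) (I : finType) (A B : pred I) :
  \sum_(ij : I * I) ((A ij.1 && B ij.2)%:R : R) = (#|A| * #|B|)%:R.
Proof.
rewrite -(pair_big xpredT xpredT (fun i j => ((A i && B j)%:R : R))) /= natrM.
rewrite -sum_indicator mulr_suml; apply: eq_bigr => i _.
by case: (A i); rewrite ?mul1r ?mul0r -?sum_indicator // big1.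
Qed.

Section CoordSum.
Context {R : realType} {d : nat} (P : pred 'I_d).

Definition coord_sum (v : 'rV[R]_d) := \sum_(k | P k) v 0 k.

Lemma coord_sum0 : coord_sum 0 = 0.
Proof. by apply: big1 => k _; rewrite mxE. Qed.

Lemma coord_sumD : {morph coord_sum : u v / u + v}.
Proof. by move=> u v; rewrite /coord_sum -big_split; apply: eq_bigr => k _; rewrite mxE. Qed.

Lemma coord_sumZ c v : coord_sum (c *: v) = c * coord_sum v.
Proof. by rewrite /coord_sum mulr_sumr; apply: eq_bigr => k _; rewrite mxE. Qed.

Lemma coord_sumN v : coord_sum (- v) = - coord_sum v.
Proof. by rewrite -scaleN1r coord_sumZ mulN1r. Qed.

Lemma coord_sum_beta i : coord_sum (beta R i) = (P i)%:R.
Proof.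
rewrite /coord_sum (eq_bigr (fun k => (k == i)%:R)); last by move=> k _; rewrite mxE eqxx.
rewrite big_mkcond /= (bigD1 i) //= big1 ?addr0; first by rewrite eqxx; case: (P i).
by move=> k /negbTE ->; case: (P k).
Qed.

Lemma pair_segments_bounds :
  within_bounds coord_sum
    (msum (fun ij : 'I_d * 'I_d => segment 0 (beta R ij.1 - beta R ij.2)))
    (- (#|P| * #|predC P|)%:R) (#|P| * #|predC P|)%:R.
Proof.
have := msum_within_bounds coord_sum coord_sum0 coord_sumD
  (S := fun ij : 'I_d * 'I_d => segment 0 (beta R ij.1 - beta R ij.2))
  (lb := fun ij => - (predC P ij.1 && P ij.2)%:R)
  (ub := fun ij => (P ij.1 && predC P ij.2)%:R).
rewrite sumrN !sum_pair_indicator mulnC; apply => -[i j] /=.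
apply: (segment_within_bounds _ coord_sumD coord_sumZ);
  rewrite ?coord_sum0 ?coord_sumD ?coord_sumN ?coord_sum_beta.
all: by case: (P i); case: (P j) => /=; lra.
Qed.

Lemma sym_segments_bounds :
  within_bounds coord_sum (msum (fun k : 'I_d => segment (- beta R k) (beta R k)))
    (- #|P|%:R) #|P|%:R.
Proof.
have := msum_within_bounds coord_sum coord_sum0 coord_sumD
  (S := fun k : 'I_d => segment (- beta R k) (beta R k))
  (lb := fun k => - (P k)%:R) (ub := fun k => (P k)%:R).
rewrite sumrN sum_indicator; apply => k.
apply: (segment_within_bounds _ coord_sumD coord_sumZ);
  rewrite ?coord_sumN ?coord_sum_beta.
all: by case: (P k) => /=; lra.
Qed.

Lemma neg_segments_bounds :
  within_bounds coord_sum (msum (fun k : 'I_d => segment (- beta R k) 0))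
    (- #|P|%:R) 0.
Proof.
have := msum_within_bounds coord_sum coord_sum0 coord_sumD
  (S := fun k : 'I_d => segment (- beta R k) 0)
  (lb := fun k => - (P k)%:R) (ub := fun=> 0).
rewrite sumrN sum_indicator big1 //; apply => k.
apply: (segment_within_bounds _ coord_sumD coord_sumZ);
  rewrite ?coord_sum0 ?coord_sumN ?coord_sum_beta.
all: by case: (P k) => /=; lra.
Qed.

Lemma Va1_coord_sum_bounds (a : nat) :
  within_bounds coord_sum (Va1 R a d)
    (- (#|P|%:R * ((a%:R + 2) / 2) + 3 / 2 * (#|P| * #|predC P|)%:R))
    (#|P|%:R * (a%:R / 2) + 3 / 2 * (#|P| * #|predC P|)%:R).
Proof.
have a_ge0 : (0 : R) <= a%:R / 2 by rewrite divr_ge0 ?ler0n.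
move=> chi /(mplus_within_bounds coord_sum coord_sumD
  (mplus_within_bounds coord_sum coord_sumD
    (mscale_within_bounds coord_sum coord_sumZ (ltac:(lra) : (0 : R) <= 3 / 2)
       pair_segments_bounds)
    (mscale_within_bounds coord_sum coord_sumZ a_ge0 sym_segments_bounds))
  neg_segments_bounds).
by rewrite /coord_sum; lra.
Qed.

End CoordSum.

Lemma card_ord_lt (n m : nat) : (m <= n)%N -> #|[pred k : 'I_n | (k < m)%N]| = m.
Proof.
move=> mn; rewrite -sum1_card -(big_mkord (fun k => (k < m)%N) (fun=> 1%N)).
by rewrite -(big_nat_widen _ _ _ xpredT _ mn) sum_nat_const_nat muln1 subn0.
Qed.

Lemma card_ord_ge (n m : nat) : #|[pred k : 'I_n | (m <= k)%N]| = (n - m)%N.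
Proof.
rewrite -sum1_card (eq_bigl (fun k : 'I_n => xpredT (k : nat) && (m <= k)%N)) //.
by rewrite -(big_geq_mkord m n xpredT (fun=> 1%N)) sum_nat_const_nat muln1.
Qed.


Lemma Va1_top_sum_le {R : realType} {a N m : nat} {chi : 'rV[R]_N.+1} :
  Va1 R a N.+1 chi -> (m <= N.+1)%N ->
  top_sum (fun k => chi 0 (inord k)) N.+1 m
    <= m%:R * (a%:R / 2) + 3 / 2 * (m * (N.+1 - m))%:R.
Proof.
move=> chiV mN; pose P := [pred k : 'I_N.+1 | (N.+1 - m <= k)%N].
have -> : top_sum (fun k => chi 0 (inord k)) N.+1 m = \sum_(k | P k) chi 0 k.
  by rewrite /top_sum big_geq_mkord; apply: eq_big => // k _; rewrite inord_val.
have cardP : #|P| = m by rewrite card_ord_ge subKn.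
have cardCP : #|predC P| = (N.+1 - m)%N.
  rewrite -(card_ord_lt _ _ (leq_subr m N.+1)); apply: eq_card => k.
  by rewrite !inE -ltnNge.
by have := Va1_coord_sum_bounds P a chi chiV; rewrite cardP cardCP => /andP[_].
Qed.

Lemma Va1_bot_sum_ge {R : realType} {a N m : nat} {chi : 'rV[R]_N.+1} :
  Va1 R a N.+1 chi -> (m <= N.+1)%N ->
  m%:R * - ((a%:R + 2) / 2) - 3 / 2 * (m * (N.+1 - m))%:R
    <= \sum_(0 <= k < m) chi 0 (inord k).
Proof.
move=> chiV mN; pose P := [pred k : 'I_N.+1 | (k < m)%N].
have -> : \sum_(0 <= k < m) chi 0 (inord k) = \sum_(k | P k) chi 0 k.
  rewrite (big_nat_widen _ _ _ _ _ mN) big_mkord.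
  by apply: eq_big => // k _; rewrite inord_val.
have cardCP : #|predC P| = (N.+1 - m)%N.
  rewrite -card_ord_ge; apply: eq_card => k.
  by rewrite !inE -leqNgt.
have := Va1_coord_sum_bounds P a chi chiV.
by rewrite /coord_sum card_ord_lt // cardCP => /andP[+ _]; lra.
Qed.

Lemma sum_scale_beta (R : realType) (d : nat) (w : 'I_d -> R) :
  \sum_i w i *: beta R i = \row_k w k.
Proof.
apply/rowP => k; rewrite summxE mxE (bigD1 k) //= big1 ?addr0.
  by rewrite !mxE !eqxx mulr1.
by move=> i ik; rewrite !mxE eqxx eq_sym (negbTE ik) mulr0.
Qed.

Lemma pair_combination_row (R : realType) (d : nat) (e : nat -> nat -> R)
    (c : nat -> R) :
  \sum_(i < d) \sum_(j < d | (j < i)%N) e i j *: (beta R i - beta R j)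
    + \sum_(i < d) c i *: beta R i
  = \row_(k < d) (\sum_(0 <= j < k) e k j - \sum_(k.+1 <= i < d) e i k + c k).
Proof.
under eq_bigr => i _ do rewrite (eq_bigr _ (fun j _ => scalerBr _ _ _)) sumrB -scaler_suml.
rewrite sumrB (exchange_big_dep xpredT) //=.
under [X in _ - X + _]eq_bigr => j _ do rewrite -scaler_suml.
rewrite !sum_scale_beta; apply/rowP => k; rewrite !mxE (big_geq_mkord k.+1).
by rewrite (big_nat_widen 0 k d _ _ (ltnW (ltn_ord k))) big_mkord.
Qed.

Lemma strictly_dominant_mono {R : realType} {N : nat} {chi : 'rV[R]_N.+1} :
  strictly_dominant chi ->
  forall i j, (i <= j < N.+1)%N -> chi 0 (inord i) <= chi 0 (inord j).
Proof.
move=> chi_dom i j /andP[]; rewrite leq_eqVlt => /orP[/eqP -> // | ij jN].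
by apply/ltW/chi_dom; rewrite !inordK //; lia.
Qed.

Theorem proposition3p3 (R : realType) (a d : nat) (chi : 'rV[R]_d) :
  strictly_dominant chi -> Va1 R a d chi ->
  exists (cij : 'I_d -> 'I_d -> R) (ci : 'I_d -> R),
    chi = \sum_(i < d) \sum_(j < d | (j < i)%N) cij i j *: (beta R i - beta R j)
          + \sum_(i < d) ci i *: beta R i
    /\ (forall i j : 'I_d, (j < i)%N -> 0 <= cij i j <= 3 / 2)
    /\ (forall i : 'I_d, - ((a%:R + 2) / 2) <= ci i <= a%:R / 2).
Proof.
case: d chi => [|N] chi chi_dom chiV.
  by exists (fun _ _ => 0), (fun _ => 0); split; [apply/rowP; case | split; case].
have t_gt0 : (0 : R) < 3 / 2 by lra.
have lo_le_hi : - ((a%:R + 2) / 2) <= a%:R / 2 :> R by have : (0 : R) <= a%:R by []; lra.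
have [c [c_in xc_mono xc_sum xc_top]] := clamp_decomposition t_gt0 lo_le_hi
  (strictly_dominant_mono chi_dom) (fun m => Va1_top_sum_le chiV)
  (fun m => Va1_bot_sum_ge chiV).
have [e [e_in e_eq]] := flow_decomposition t_gt0 xc_mono xc_sum xc_top.
exists (fun i j => e i j), (fun i => c i); split; last first.
  by split=> [i j _ | i]; [exact: e_in | exact: c_in].
rewrite pair_combination_row; apply/rowP => k; rewrite mxE.
by rewrite -(e_eq k (ltn_ord k)) inord_val subrK.
Qed.
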